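(* For every $n\ge1$, $$\sum_{e\in\mathbf I_n(021)}t^{\mathrm{asc}(e)}=\sum_{k=0}^{\lfloor (n-1)/2\rfloor}\big|\widetilde{\mathbf I}_{n,k}(021)\big|\,t^k(1+t)^{n-1-2k}.$$
   Context: $\mathbf I_n=\{(e_1,\dots,e_n):0\le e_i\le i-1\}$; $\mathbf I_n(021)$ is the set of $e\in\mathbf I_n$ with no $i<j<k$ such that $e_i<e_k<e_j$. $\mathrm{ASC}(e)=\{i\in[n-1]:e_i<e_{i+1}\}$, $\mathrm{asc}(e)=|\mathrm{ASC}(e)|$. An index $i\in[n-2]$ is a double ascent of $e$ if $\{i,i+1\}\subseteq\mathrm{ASC}(e)$. $\widetilde{\mathbf I}_{n,k}(021)=\{e\in\mathbf I_n(021):\mathrm{asc}(e)=k,\ e\text{ has no double ascents, and } e_{n-1}\ge e_n\}$ (for $n=1$ the last condition is vacuous). *)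

From mathcomp Require Import all_boot all_order all_algebra.
Set Implicit Arguments. Unset Strict Implicit. Unset Printing Implicit Defensive.
Import GRing.Theory.

(* An element of I_n is encoded as f : {ffun 'I_n -> 'I_n}, with the 0-based
   position i holding e_{i+1}; the constraint 0 <= e_{i+1} <= i. *)
Definition inv_seq (n : nat) (f : {ffun 'I_n -> 'I_n}) : bool :=
  [forall i : 'I_n, (f i : nat) <= i].

Definition ev n (f : {ffun 'I_n -> 'I_n}) (i : nat) : nat :=
  match insub i with Some j => (f j : nat) | None => 0 end.

Definition avoids021 n (f : {ffun 'I_n -> 'I_n}) : bool :=
  [forall i : 'I_n, forall j : 'I_n, forall k : 'I_n,
     ~~ [&& i < j, j < k, f i < f k & f k < f j]].

Definition inv021 n (f : {ffun 'I_n -> 'I_n}) : bool := inv_seq f && avoids021 f.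

(* 0-based ascent positions i (i+1 in [n-1]) with e_{i+1} < e_{i+2}. *)
Definition is_asc n (f : {ffun 'I_n -> 'I_n}) (i : nat) : bool :=
  (i.+1 < n) && (ev f i < ev f i.+1).

Definition asc n (f : {ffun 'I_n -> 'I_n}) : nat := count (is_asc f) (iota 0 n.-1).

Definition no_double_asc n (f : {ffun 'I_n -> 'I_n}) : bool :=
  all (fun i => ~~ (is_asc f i && is_asc f i.+1)) (iota 0 n.-2).

Definition last_cond n (f : {ffun 'I_n -> 'I_n}) : bool :=
  (n <= 1) || (ev f n.-1 <= ev f n.-2).

Definition tilde_I n (k : nat) (f : {ffun 'I_n -> 'I_n}) : bool :=
  [&& inv021 f, asc f == k, no_double_asc f & last_cond f].

(* An inversion sequence avoids 021 iff each entry is 0 or at least every earlier entry.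
   Both sides of the identity are then sums over such sequences of a weight that is a
   product of step weights, each depending only on whether the current and the previous
   step are ascents: t^asc on the left, and on the right t^asc (1+t)^(n-1-2 asc)
   restricted to sequences without double ascents that do not end with an ascent.  The
   weighted sum over the continuations of a prefix only depends on the number of values
   above its maximum and on whether its last entry is 0 or the maximum; this gives a
   recursion for the generating functions in a variable x marking the length.
   Eliminating, both series satisfy p = 1 + (1+t) x p + t x^2 p^2 + t x^2 p^3, which has
   a unique power series solution. *)

From mathcomp Require Import all_boot all_order all_algebra.
From mathcomp Require Import zify ring.
Set Implicit Arguments. Unset Strict Implicit. Unset Printing Implicit Defensive.
Import GRing.Theory.
Local Open Scope ring_scope.

Notation tpoly := {poly int}.
Notation xpoly := {poly {poly int}}.

(* ['X] is the length variable x of the series, [tX] the variable t of their coefficients. *)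
Definition tX : xpoly := ('X : tpoly)%:P.

Definition zero_below (N : nat) (p : xpoly) : Prop := forall i, (i < N)%N -> p`_i = 0.

Lemma zero_belowD N p q : zero_below N p -> zero_below N q -> zero_below N (p + q).
Proof. by move=> hp hq i hi; rewrite coefD hp // hq // addr0. Qed.

Lemma zero_belowN N p : zero_below N p -> zero_below N (- p).
Proof. by move=> hp i hi; rewrite coefN hp // oppr0. Qed.

Lemma zero_belowB N p q : zero_below N p -> zero_below N q -> zero_below N (p - q).
Proof. by move=> hp hq; apply: zero_belowD => //; apply: zero_belowN. Qed.

Lemma zero_belowMl N c p : zero_below N p -> zero_below N (c * p).
Proof.
move=> hp i hi; rewrite coefM big1 // => j _; rewrite hp ?mulr0 //.
by apply: leq_ltn_trans hi; rewrite leq_subr.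
Qed.

Lemma zero_belowMr N c p : zero_below N p -> zero_below N (p * c).
Proof. by move=> hp; rewrite mulrC; apply: zero_belowMl. Qed.

Lemma zero_belowXM N p : zero_below N p -> zero_below N.+1 ('X * p).
Proof. by move=> hp [|i] hi; rewrite coefXM //= hp. Qed.

Lemma zero_below_sum N I (r : seq I) (F : I -> xpoly) :
  (forall i, zero_below N (F i)) -> zero_below N (\sum_(i <- r) F i).
Proof.
move=> hF; elim: r => [|a r ih]; first by rewrite big_nil => i; rewrite coef0.
by rewrite big_cons; apply: zero_belowD.
Qed.

(* [1 - x c] is invertible as a power series. *)
Lemma zero_below_cancel N p c : zero_below N (p * (1 - 'X * c)) -> zero_below N p.
Proof.
move=> h i; elim: i {-2}i (leqnn i) => [|i ih] j hj hjN.
  have := h j hjN; move: hj; rewrite leqn0 => /eqP ->.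
  by rewrite mulrBr mulr1 coefB mulrCA coefXM /= subr0.
have := h j hjN; rewrite mulrBr mulr1 coefB mulrCA coefXM.
case: j hj hjN => [|j] hj hjN; first by rewrite subr0.
rewrite /= coefM big1 ?subr0 // => k _.
have hk := ltn_ord k.
rewrite ih ?mul0r //; first by rewrite -ltnS (leq_trans hk).
by apply: leq_ltn_trans hjN; rewrite -ltnS (leq_trans hk).
Qed.

Definition trunc (N : nat) (F : nat -> tpoly) : xpoly := \sum_(i < N) (F i)%:P * 'X^i.

Lemma coef_trunc N F i : (i < N)%N -> (trunc N F)`_i = F i.
Proof.
move=> hi; rewrite /trunc coef_sum (bigD1 (Ordinal hi)) //= coefCM coefXn eqxx mulr1.
rewrite big1 ?addr0 // => j /eqP hj; rewrite coefCM coefXn.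
by case: eqP => [e|]; [case: hj; apply: val_inj | rewrite mulr0].
Qed.

Lemma eq_trunc N F G : F =1 G -> trunc N F = trunc N G.
Proof. by move=> h; apply: eq_bigr => i _; rewrite h. Qed.

Lemma truncS N F : trunc N.+1 F = (F 0%N)%:P + 'X * trunc N (fun i => F i.+1).
Proof.
rewrite /trunc big_ord_recl /= expr0 mulr1 big_distrr /=; congr (_ + _).
by apply: eq_bigr => i _; rewrite exprS mulrCA.
Qed.

Lemma truncD N F G : trunc N (fun i => F i + G i) = trunc N F + trunc N G.
Proof. by rewrite /trunc -big_split /=; apply: eq_bigr => i _; rewrite polyCD mulrDl. Qed.

Lemma truncMl N c F : trunc N (fun i => c * F i) = c%:P * trunc N F.
Proof. by rewrite /trunc big_distrr; apply: eq_bigr => i _; rewrite polyCM -mulrA. Qed.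

Lemma trunc_sum N I (r : seq I) (F : I -> nat -> tpoly) :
  trunc N (fun i => \sum_(h <- r) F h i) = \sum_(h <- r) trunc N (F h).
Proof.
elim: r => [|a r ih]; first by rewrite big_nil /trunc big1 // => i _; rewrite big_nil mul0r.
by rewrite big_cons -ih -truncD; apply: eq_trunc => i; rewrite big_cons.
Qed.

Lemma zero_below_truncS N F : zero_below N (trunc N.+1 F - trunc N F).
Proof.
rewrite /trunc big_ord_recr /= addrAC subrr add0r.
by move=> i hi; rewrite coefCM coefXn (ltn_eqF hi) mulr0.
Qed.

(* What a prefix whose nonzero entries are records passes on to its continuations: all
   entries are 0 ([Zeros]), or the maximum is positive and the last entry is 0 ([AtZero])
   or the maximum ([AtMax]). *)
Inductive phase := Zeros | AtZero | AtMax.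

Definition at_zero (k : phase) : bool := if k is AtZero then true else false.
Definition after_zero (k : phase) : phase := if k is Zeros then Zeros else AtZero.

Section Transfer.

Variables (step : bool -> bool -> tpoly) (fin : bool -> tpoly).

Definition step_to_max (k : phase) (a : bool) : tpoly :=
  if k is Zeros then 0 else step a (at_zero k).

(* Weighted sum over the [m]-entry continuations of a prefix in phase [k] that ends with an
   ascent iff [a] and leaves [H.+1] values above its maximum for the next entry: an entry
   that is an ascent iff [b] costs [step a b], and the end costs [fin a]. *)
Fixpoint tail_sum (m H : nat) (k : phase) (a : bool) : tpoly :=
  if m is m'.+1 then
      step a false * tail_sum m' H.+1 (after_zero k) false
    + step_to_max k a * tail_sum m' H.+1 AtMax (at_zero k)
    + step a true * \sum_(h < H.+1) tail_sum m' h AtMax true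
  else fin a.

Definition tail_series N H k a : xpoly := trunc N (fun m => tail_sum m H k a).

Lemma tail_seriesS N H k a : tail_series N.+1 H k a = (fin a)%:P + 'X *
  ((step a false)%:P * tail_series N H.+1 (after_zero k) false
   + (step_to_max k a)%:P * tail_series N H.+1 AtMax (at_zero k)
   + (step a true)%:P * \sum_(h < H.+1) tail_series N h AtMax true).
Proof. by rewrite /tail_series truncS -trunc_sum -!truncMl -!truncD. Qed.

Definition top_factor N : xpoly := 1 + tX * 'X * tail_series N 0 AtMax true.

Lemma zero_below_tail_seriesS N H k a :
  zero_below N (tail_series N.+1 H k a - tail_series N H k a).
Proof. exact: zero_below_truncS. Qed.

Lemma zero_below_top_factorS N : zero_below N.+1 (top_factor N.+1 - top_factor N).
Proof.
have -> : top_factor N.+1 - top_factor N =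
    tX * ('X * (tail_series N.+1 0 AtMax true - tail_series N 0 AtMax true)).
  by rewrite /top_factor; ring.
by apply/zero_belowMl/zero_belowXM/zero_below_tail_seriesS.
Qed.

Hypothesis step_asc : forall a, step a true = 'X * fin a.

Lemma tail_series_shift N H k a :
  zero_below N (tail_series N H.+1 k a - tail_series N H k a * top_factor N).
Proof.
elim: N H k a => [|N ih] H k a; first by [].
have -> : tail_series N.+1 H.+1 k a - tail_series N.+1 H k a * top_factor N.+1 =
    (tail_series N.+1 H.+1 k a - tail_series N.+1 H k a * top_factor N)
    - tail_series N.+1 H k a * (top_factor N.+1 - top_factor N) by ring.
apply: zero_belowB; last exact/zero_belowMl/zero_below_top_factorS.
rewrite !tail_seriesS big_ord_recl step_asc polyCM /=.
set S1 := \sum_(i < H.+1) _; set S0 := \sum_(h < H.+1) _.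
have hS : zero_below N (S1 - S0 * top_factor N).
  by rewrite /S1 /S0 big_distrl -sumrB; apply: zero_below_sum => i; apply: ih.
have -> : forall (f c0 c1 X1 Y1 X2 Y2 : xpoly),
    f + 'X * (c0 * X1 + c1 * X2 + tX * f * (tail_series N 0 AtMax true + S1))
    - (f + 'X * (c0 * Y1 + c1 * Y2 + tX * f * S0)) * top_factor N =
    'X * (c0 * (X1 - Y1 * top_factor N) + c1 * (X2 - Y2 * top_factor N)
          + tX * f * (S1 - S0 * top_factor N)).
  by move=> *; rewrite /top_factor; ring.
by apply/zero_belowXM/zero_belowD; [apply: zero_belowD|]; apply/zero_belowMl.
Qed.

Lemma zero_below_shift_top N H k a : zero_below N
  (tail_series N H.+1 k a - tail_series N.+1 H k a * top_factor N.+1).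
Proof.
have -> : tail_series N H.+1 k a - tail_series N.+1 H k a * top_factor N.+1 =
    (tail_series N H.+1 k a - tail_series N H k a * top_factor N)
    - (tail_series N.+1 H k a - tail_series N H k a) * top_factor N
    - tail_series N.+1 H k a * (top_factor N.+1 - top_factor N) by ring.
apply: zero_belowB; first apply: zero_belowB.
- exact: tail_series_shift.
- exact/zero_belowMr/zero_below_tail_seriesS.
- by apply/zero_belowMl => i hi; apply: zero_below_top_factorS; apply: ltnW.
Qed.

Lemma tail_series_level0 N k a : zero_below N (tail_series N 0 k a - ((fin a)%:P + 'X *
  ((step a false)%:P * tail_series N 0 (after_zero k) false * top_factor N
   + (step_to_max k a)%:P * tail_series N 0 AtMax (at_zero k) * top_factor N
   + (step a true)%:P * tail_series N 0 AtMax true))).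
Proof.
case: N => [|N]; first by [].
rewrite tail_seriesS big_ord1.
have -> : forall (f c0 c1 c2 X1 Y1 X2 Y2 Z K : xpoly),
    f + 'X * (c0 * X1 + c1 * X2 + c2 * tail_series N 0 AtMax true)
    - (f + 'X * (c0 * Y1 * K + c1 * Y2 * K + c2 * Z)) =
    'X * (c0 * (X1 - Y1 * K) + c1 * (X2 - Y2 * K)
          - c2 * (Z - tail_series N 0 AtMax true)) by move=> *; ring.
apply/zero_belowXM/zero_belowB; first apply: zero_belowD.
all: apply/zero_belowMl; first [exact: zero_below_shift_top | exact: zero_below_tail_seriesS].
Qed.

End Transfer.

Definition cubic_residual (p : xpoly) : xpoly :=
  p - (1 + (1 + tX) * 'X * p + tX * 'X^2 * p ^+ 2 + tX * 'X^2 * p ^+ 3).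

Lemma cubic_residual_uniq N p q :
  zero_below N (cubic_residual p) -> zero_below N (cubic_residual q) -> zero_below N (p - q).
Proof.
move=> hp hq; apply: (@zero_below_cancel _ _
  ((1 + tX) + tX * 'X * (p + q) + tX * 'X * (p ^+ 2 + p * q + q ^+ 2))).
have -> : (p - q) *
    (1 - 'X * ((1 + tX) + tX * 'X * (p + q) + tX * 'X * (p ^+ 2 + p * q + q ^+ 2))) =
    cubic_residual p - cubic_residual q by rewrite /cubic_residual; ring.
exact: zero_belowB.
Qed.

Definition stepA (a b : bool) : tpoly := if b then 'X else 1.
Definition finA (a : bool) : tpoly := 1.

(* Along a sequence, these multiply up to the weight [wtG] below (see [wtG_rcons]). *)
Definition stepG (a b : bool) : tpoly :=
  if b then (if a then 0 else 'X) else (if a then 1 else 1 + 'X).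
Definition finG (a : bool) : tpoly := if a then 0 else 1.

Lemma stepA_asc a : stepA a true = 'X * finA a. Proof. by rewrite mulr1. Qed.
Lemma stepG_asc a : stepG a true = 'X * finG a.
Proof. by case: a; rewrite /= ?mulr0 ?mulr1. Qed.

Lemma cubic_stepA N : zero_below N (cubic_residual (tail_series stepA finA N 0 Zeros false)).
Proof.
have := @tail_series_level0 _ _ stepA_asc N Zeros false.
have := @tail_series_level0 _ _ stepA_asc N AtZero false.
have := @tail_series_level0 _ _ stepA_asc N AtMax false.
have := @tail_series_level0 _ _ stepA_asc N AtMax true.
rewrite /= /finA -/tX polyC1 polyC0 !mul1r !mul0r !addr0.
set p := tail_series _ _ N 0 Zeros false; set z := tail_series _ _ N 0 AtZero false.
set n := tail_series _ _ N 0 AtMax false; set T := tail_series _ _ N 0 AtMax true.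
rewrite /top_factor -/T; set K := 1 + tX * 'X * T.
move=> hT hn hz hp.
have hT' : zero_below N (T - (1 + 'X * (z * K + T * K + tX * T))).
  have -> : T - (1 + 'X * (z * K + T * K + tX * T)) =
      (T - (1 + 'X * (z * K + n * K + tX * T))) + 'X * K *
      ((n - (1 + 'X * (z * K + n * K + tX * T))) - (T - (1 + 'X * (z * K + n * K + tX * T))))
    by ring.
  by apply: zero_belowD => //; apply/zero_belowMl/zero_belowB.
have hzp : zero_below N (z - K * p).
  apply: (@zero_below_cancel _ _ K).
  have -> : (z - K * p) * (1 - 'X * K) =
      (z - (1 + 'X * (z * K + tX * T * K + tX * T))) - K * (p - (1 + 'X * (p * K + tX * T)))
    by rewrite /K; ring.
  by apply: zero_belowB => //; apply: zero_belowMl.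
have -> : cubic_residual p =
    (tX * 'X * (T - (1 + 'X * (z * K + T * K + tX * T))) + tX * 'X^2 * K * (z - K * p))
      * (1 + 'X * p) ^+ 2
    + (p - (1 + 'X * (p * K + tX * T))) *
      ((1 + 'X * p) * (1 - tX * 'X + 'X) - (tX * 'X^2 * p + 'X) * (p + K * (1 + 'X * p)))
  by rewrite /cubic_residual /K; ring.
by apply: zero_belowD; apply: zero_belowMr => //; apply: zero_belowD; apply: zero_belowMl.
Qed.

Lemma cubic_stepG N : zero_below N (cubic_residual (tail_series stepG finG N 0 Zeros false)).
Proof.
have := @tail_series_level0 _ _ stepG_asc N Zeros false.
have := @tail_series_level0 _ _ stepG_asc N AtZero false.
have := @tail_series_level0 _ _ stepG_asc N AtMax false.
have := @tail_series_level0 _ _ stepG_asc N AtMax true.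
rewrite /= -/tX polyC1 polyCD polyC0 polyC1 -/tX !mul1r !mul0r !addr0 !add0r.
set p := tail_series _ _ N 0 Zeros false; set z := tail_series _ _ N 0 AtZero false.
set n := tail_series _ _ N 0 AtMax false; set T := tail_series _ _ N 0 AtMax true.
rewrite /top_factor -/T; set K := 1 + tX * 'X * T.
move=> hT hn hz hp.
have hzp : zero_below N (z - K * p).
  apply: (@zero_below_cancel _ _ ((1 + tX) * K)).
  have -> : (z - K * p) * (1 - 'X * ((1 + tX) * K)) =
      (z - (1 + 'X * ((1 + tX) * z * K + tX * T * K + tX * T)))
      - K * (p - (1 + 'X * ((1 + tX) * p * K + tX * T)))
    by rewrite /K; ring.
  by apply: zero_belowB => //; apply: zero_belowMl.
have hnp : zero_below N (n - p * (1 + (1 + tX) * 'X * K * p)).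
  apply: (@zero_below_cancel _ _ ((1 + tX) * K)).
  have -> : (n - p * (1 + (1 + tX) * 'X * K * p)) * (1 - 'X * ((1 + tX) * K)) =
      (n - (1 + 'X * ((1 + tX) * z * K + (1 + tX) * n * K + tX * T)))
      + (1 + tX) * 'X * K * (z - K * p)
      - (1 + (1 + tX) * 'X * K * p) * (p - (1 + 'X * ((1 + tX) * p * K + tX * T)))
    by rewrite /K; ring.
  by apply: zero_belowB; [apply: zero_belowD => //|]; apply: zero_belowMl.
have -> : cubic_residual p =
    (tX * 'X * (T - 'X * (z * K + n * K))
     + tX * 'X^2 * K * ((z - K * p) + (n - p * (1 + (1 + tX) * 'X * K * p))))
      * (1 + (1 + tX) * 'X * p)
    + (p - (1 + 'X * ((1 + tX) * p * K + tX * T)))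
      * (1 - tX * 'X^2 * p * (1 + p + K * (1 + (1 + tX) * 'X * p)))
  by rewrite /cubic_residual /K; ring.
apply: zero_belowD; apply: zero_belowMr => //.
by apply: zero_belowD; apply: zero_belowMl => //; apply: zero_belowD.
Qed.

Lemma tail_sum_stepA_stepG m :
  tail_sum stepA finA m 0 Zeros false = tail_sum stepG finG m 0 Zeros false.
Proof.
have := cubic_residual_uniq (@cubic_stepA m.+1) (@cubic_stepG m.+1) (ltnSn m).
by rewrite coefB /tail_series !coef_trunc // => /eqP; rewrite subr_eq0 => /eqP.
Qed.

Definition entry (s : seq nat) i := nth 0%N s i.
Arguments entry : simpl never.

Fixpoint inv_seqs (n : nat) : seq (seq nat) :=
  if n is n'.+1 then [seq rcons s v | s <- inv_seqs n', v <- iota 0 n] else [:: [::]].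

Definition is_inv (s : seq nat) := all (fun i => entry s i <= i)%N (iota 0 (size s)).

Lemma entry_rcons s v i : (i < size s)%N -> entry (rcons s v) i = entry s i.
Proof. by move=> h; rewrite /entry nth_rcons h. Qed.
Lemma entry_rcons_last s v : entry (rcons s v) (size s) = v.
Proof. by rewrite /entry nth_rcons ltnn eqxx. Qed.

Lemma iota0S n : iota 0 n.+1 = rcons (iota 0 n) n.
Proof. by rewrite -addn1 iotaD add0n cats1. Qed.

Lemma is_inv_rcons s v : is_inv (rcons s v) = is_inv s && (v <= size s)%N.
Proof.
rewrite /is_inv size_rcons iota0S all_rcons entry_rcons_last andbC; congr andb.
apply: eq_in_all => i; rewrite mem_iota add0n => /andP [_ h].
by rewrite entry_rcons.
Qed.

Lemma mem_inv_seqs n s : (s \in inv_seqs n) = (size s == n) && is_inv s.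
Proof.
elim: n s => [|n ih] s.
  by case: s => [|a s] //=; rewrite inE.
case/lastP: s => [|s v].
  apply/negbTE/allpairsP => -[[s v] /= [_ _ e]].
  by move: e; case: s.
rewrite size_rcons eqSS is_inv_rcons.
apply/allpairsP/idP => [[[s' v'] []]|].
  rewrite mem_iota add0n ltnS /= => hs hv e.
  case: (rcons_inj e) => -> ->; move: hs; rewrite ih => /andP [/eqP hs ->].
  by rewrite hs eqxx /=.
move=> /and3P [/eqP hs hi hv]; exists (s, v); split.
- by rewrite ih hs eqxx.
- by rewrite mem_iota add0n ltnS -hs.
- by [].
Qed.

Lemma inv_seqs_uniq n : uniq (inv_seqs n).
Proof.
elim: n => [|n ih] //.
change (uniq [seq rcons s v | s <- inv_seqs n, v <- iota 0 n.+1]).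
apply: allpairs_uniq => //; first exact: iota_uniq.
by move=> [s v] [s' v'] _ _ /= e; case: (rcons_inj e) => -> ->.
Qed.

Definition seqmax (s : seq nat) := foldr maxn 0%N s.
Lemma seqmax_rcons s v : seqmax (rcons s v) = maxn (seqmax s) v.
Proof. by elim: s => [|a s ih] /=; rewrite ?max0n ?maxn0 // ih maxnA. Qed.
Lemma seqmax_leq s v :
  (seqmax s <= v)%N = all (fun j => entry s j <= v)%N (iota 0 (size s)).
Proof.
have -> : all (fun j => entry s j <= v)%N (iota 0 (size s)) = all (fun x => x <= v)%N s.
  by rewrite -{3}(mkseq_nth 0%N s) /mkseq all_map.
by elim: s => [|a s ih] //=; rewrite geq_max ih.
Qed.

Definition zero_or_record (s : seq nat) :=
  all (fun k => (entry s k == 0%N) || all (fun j => entry s j <= entry s k)%N (iota 0 k))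
    (iota 0 (size s)).

Lemma zero_or_record_rcons s v :
  zero_or_record (rcons s v) = zero_or_record s && ((v == 0%N) || (seqmax s <= v)%N).
Proof.
rewrite /zero_or_record size_rcons iota0S all_rcons entry_rcons_last seqmax_leq andbC.
congr andb.
  apply: eq_in_all => i; rewrite mem_iota add0n => /andP [_ h].
  rewrite entry_rcons //; congr orb.
  apply: eq_in_all => j; rewrite mem_iota add0n => /andP [_ hj].
  by rewrite entry_rcons // (ltn_trans hj).
congr orb; apply: eq_in_all => j; rewrite mem_iota add0n => /andP [_ h].
by rewrite entry_rcons.
Qed.

Definition last_entry (s : seq nat) := entry s (size s).-1.
Definition ends_asc (s : seq nat) :=
  (1 < size s)%N && (entry s (size s).-2 < entry s (size s).-1)%N.
Definition nasc (s : seq nat) :=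
  count (fun i => entry s i < entry s i.+1)%N (iota 0 (size s).-1).
Definition no_dasc (s : seq nat) :=
  all (fun i => ~~ ((entry s i < entry s i.+1) && (entry s i.+1 < entry s i.+2)))%N
    (iota 0 (size s).-2).

Lemma last_entry_rcons s v : last_entry (rcons s v) = v.
Proof. by rewrite /last_entry size_rcons /= entry_rcons_last. Qed.

Lemma ends_asc_rcons s v : (0 < size s)%N -> ends_asc (rcons s v) = (last_entry s < v)%N.
Proof.
move=> h; rewrite /ends_asc size_rcons ltnS h /= entry_rcons_last /last_entry.
by rewrite entry_rcons // prednK.
Qed.

Lemma nasc_rcons s v : (0 < size s)%N -> nasc (rcons s v) = (nasc s + (last_entry s < v))%N.
Proof.
move=> h; rewrite /nasc size_rcons succnK -{1}(prednK h) iota0S.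
rewrite -[rcons (iota _ _) _]cats1 count_cat.
congr addn.
  apply: eq_in_count => i; rewrite mem_iota add0n => /andP [_ hi].
  by rewrite !entry_rcons //; lia.
by rewrite /= addn0 prednK // entry_rcons_last entry_rcons ?prednK // /last_entry.
Qed.

Lemma no_dasc_rcons s v : (0 < size s)%N ->
  no_dasc (rcons s v) = no_dasc s && ~~ (ends_asc s && (last_entry s < v)%N).
Proof.
move=> h; have [h1|h2] : size s = 1%N \/ (1 < size s)%N by lia.
  by rewrite /no_dasc /ends_asc size_rcons h1.
have ha : ((size s).+1.-2 = ((size s).-2).+1)%N by lia.
rewrite /no_dasc /ends_asc size_rcons ha h2 andTb iota0S all_rcons andbC; congr andb.
  apply: eq_in_all => i; rewrite mem_iota add0n => /andP [_ hi].
  by rewrite !entry_rcons //; lia.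
have hb : ((size s).-2.+1 = (size s).-1)%N by lia.
have hc : ((size s).-2.+2 = size s)%N by lia.
rewrite hc hb /last_entry entry_rcons_last !entry_rcons //; lia.
Qed.

Lemma nasc_bound s : (0 < size s)%N -> no_dasc s -> (2 * nasc s <= (size s).-1 + ends_asc s)%N.
Proof.
elim/last_ind: s => [//|s v ih] _.
case: (posnP (size s)) => hs.
  by move: hs => /size0nil ->.
rewrite no_dasc_rcons // nasc_rcons // ends_asc_rcons // size_rcons => /andP [hn hl].
have := ih hs hn.
move: hl; case: (ends_asc s); case: (last_entry s < v)%N => //= _; lia.
Qed.


Lemma sum_iota_rev (V : nmodType) b c (G : nat -> V) :
  \sum_(v <- iota b c) G v = \sum_(h < c) G ((b + c).-1 - h)%N.
Proof.
elim: c b => [|c ih] b; first by rewrite big_nil big_ord0.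
rewrite big_cons big_ord_recr /= addrC ih addSnnS; congr (_ + G _); lia.
Qed.

Lemma sum_record_values (V : nmodType) n M (G : nat -> V) : (M <= n)%N ->
  \sum_(v <- iota 0 n.+1 | (v == 0%N) || (M <= v)%N) G v =
  G 0%N + (if M == 0%N then 0 else G M) + \sum_(h < n - M) G (n - h)%N.
Proof.
case: M => [|M] hMn.
  rewrite (eq_bigl xpredT) => [|v]; last by rewrite orbT.
  by rewrite sum_iota_rev big_ord_recr /= subn0 subnn addr0 addrC.
have -> : iota 0 n.+1 = 0%N :: iota 1 M ++ M.+1 :: iota M.+2 (n - M.+1).
  by rewrite {1}(_ : n.+1 = M.+1 + (n - M.+1).+1)%N ?iotaD //; lia.
rewrite big_cons big_cat big_cons /= ltnSn big1_seq ?add0r => [|v]; last first.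
  by rewrite mem_iota => /andP [hv1 hv2]; lia.
rewrite addrA -big_filter.
have /all_filterP -> : all (fun v => (v == 0%N) || (M < v)%N) (iota M.+2 (n - M.+1)).
  by apply/allP => v; rewrite mem_iota => /andP [hv _]; lia.
by rewrite sum_iota_rev; congr (_ + _); apply: eq_bigr => h _; congr G; lia.
Qed.

Section Extensions.

Variables (step : bool -> bool -> tpoly) (fin : bool -> tpoly).

(* [tail_sum] before the phase reduction: the prefix has length [n], maximum [M] and last
   entry [l]. *)
Fixpoint ext_sum (m n M l : nat) (a : bool) : tpoly :=
  if m is m'.+1 then
    \sum_(v <- iota 0 n.+1 | (v == 0%N) || (M <= v)%N)
       step a (l < v)%N * ext_sum m' n.+1 (maxn M v) v (l < v)%N
  else fin a.

Lemma ext_sumS m n M l a : ext_sum m.+1 n M l a =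
  \sum_(v <- iota 0 n.+1 | (v == 0%N) || (M <= v)%N)
     step a (l < v)%N * ext_sum m n.+1 (maxn M v) v (l < v)%N.
Proof. by []. Qed.

Variable wt : seq nat -> tpoly.
Hypothesis wt_rcons : forall s v, (0 < size s)%N ->
  wt (rcons s v) = wt s * step (ends_asc s) (last_entry s < v)%N.

Lemma sum_extensions m n :
  \sum_(s <- inv_seqs (n.+1 + m) | zero_or_record s) wt s * fin (ends_asc s) =
  \sum_(s <- inv_seqs n.+1 | zero_or_record s)
     wt s * ext_sum m n.+1 (seqmax s) (last_entry s) (ends_asc s).
Proof.
elim: m n => [|m ih] n; first by rewrite addn0.
rewrite addnS -addSn ih.
change (inv_seqs n.+2) with [seq rcons s v | s <- inv_seqs n.+1, v <- iota 0 n.+2].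
rewrite big_mkcond big_allpairs_dep [RHS]big_mkcond !big_seq; apply: eq_bigr => s hs.
have hsz : (0 < size s)%N by move: hs; rewrite mem_inv_seqs => /andP [/eqP -> _].
case hs0 : (zero_or_record s); last first.
  by rewrite big1 // => v _; rewrite zero_or_record_rcons hs0.
rewrite ext_sumS [in RHS]big_mkcond big_distrr.
apply: eq_bigr => v _; rewrite zero_or_record_rcons hs0 wt_rcons //.
rewrite seqmax_rcons last_entry_rcons ends_asc_rcons //.
by rewrite /=; case: ifP; rewrite ?mulr0 // mulrA.
Qed.

Definition phase_of (M l : nat) : phase :=
  if M == 0%N then Zeros else if l == 0%N then AtZero else AtMax.

Lemma ext_sum_tail_sum m n M l a : (M < n)%N -> (l == 0%N) || (l == M) ->
  ext_sum m n M l a = tail_sum step fin m (n - M).-1 (phase_of M l) a.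
Proof.
elim: m n M l a => [//|m ih] n M l a hMn hl.
rewrite ext_sumS (sum_record_values _ (ltnW hMn)) [tail_sum _ _ m.+1 _ _ _]/= maxn0.
have hn : ((n.+1 - M).-1 = ((n - M).-1).+1)%N by lia.
have hMn1 : (M < n.+1)%N by apply: ltnW.
congr (_ + _ + _).
- rewrite ih ?hMn1 ?eqxx // ltn0 hn; congr (_ * tail_sum _ _ _ _ _ _).
  by rewrite /phase_of; case: ifP => // _; case: ifP.
- case: (posnP M) => [->|hM0]; first by rewrite mul0r.
  rewrite maxnn ih ?hMn1 ?eqxx ?orbT // hn /phase_of (gtn_eqF hM0).
  by case/orP: hl => /eqP ->; rewrite ?ltnn ?eqxx ?hM0 ?(gtn_eqF hM0).
- rewrite (_ : ((n - M).-1).+1 = n - M)%N; last by lia.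
  rewrite big_distrr; apply: eq_bigr => h _; have hh := ltn_ord h.
  have hv : (l < n - h)%N by case/orP: hl => /eqP ->; lia.
  rewrite hv (_ : maxn M (n - h) = n - h)%N; last by lia.
  rewrite ih ?eqxx ?orbT //; last by lia.
  rewrite /phase_of (_ : (n - h == 0)%N = false); last by lia.
  by congr (_ * tail_sum _ _ _ _ _ _); lia.
Qed.

End Extensions.

Section SeqOf.
Variable n : nat.
Implicit Types f : {ffun 'I_n -> 'I_n}.

Definition seq_of f : seq nat := mkseq (ev f) n.

Lemma size_seq_of f : size (seq_of f) = n. Proof. by rewrite size_mkseq. Qed.

Lemma entry_seq_of f i : entry (seq_of f) i = ev f i.
Proof.
rewrite /entry; case: (ltnP i n) => h; first by rewrite nth_mkseq.
by rewrite nth_default ?size_seq_of // /ev insubN // -leqNgt.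
Qed.

Lemma ev_ord f (j : 'I_n) : ev f j = f j.
Proof. by rewrite /ev valK. Qed.

Lemma seq_of_inj : injective seq_of.
Proof.
move=> f g e; apply/ffunP => j; apply: val_inj.
by have := congr1 (fun s => entry s j) e; rewrite /= !entry_seq_of !ev_ord.
Qed.

Lemma is_inv_seq_of f : is_inv (seq_of f) = inv_seq f.
Proof.
rewrite /is_inv size_seq_of /inv_seq; apply/allP/forallP => [h j|h i].
  by rewrite -ev_ord -entry_seq_of; apply: h; rewrite mem_iota add0n ltn_ord.
rewrite mem_iota add0n => /andP [_ hi].
by have := h (Ordinal hi); rewrite entry_seq_of -ev_ord.
Qed.

Lemma mem_map_seq_of s :
  (s \in [seq seq_of f | f <- enum [pred f | inv_seq f]]) = (s \in inv_seqs n).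
Proof.
rewrite mem_inv_seqs; apply/mapP/idP => [[f]|/andP [/eqP hs hi]].
  by rewrite mem_enum inE => hf ->; rewrite size_seq_of eqxx is_inv_seq_of.
have hlt : forall i : 'I_n, (entry s i < n)%N.
  move=> i; move/allP: hi => /(_ i); rewrite mem_iota add0n hs ltn_ord => /(_ isT) h.
  exact: leq_ltn_trans h (ltn_ord i).
exists [ffun i => Ordinal (hlt i)].
  rewrite mem_enum inE; apply/forallP => i; rewrite ffunE /=.
  by move/allP: hi => /(_ i); rewrite mem_iota add0n hs ltn_ord => /(_ isT).
apply: (@eq_from_nth _ 0%N); first by rewrite size_seq_of.
move=> i; rewrite hs => hin; rewrite -/(entry s i) -/(entry _ i) entry_seq_of.
by rewrite (_ : i = Ordinal hin) // ev_ord ffunE.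
Qed.

Lemma sum_inv_seqs (V : nmodType) (P : pred (seq nat)) (G : seq nat -> V) :
  \sum_(f | inv_seq f && P (seq_of f)) G (seq_of f) = \sum_(s <- inv_seqs n | P s) G s.
Proof.
have hp : perm_eq [seq seq_of f | f <- enum [pred f | inv_seq f]] (inv_seqs n).
  apply: uniq_perm; last exact: mem_map_seq_of.
    by rewrite map_inj_uniq ?enum_uniq //; exact: seq_of_inj.
  exact: inv_seqs_uniq.
rewrite -(perm_big _ hp) big_map big_enum_cond /=.
by apply: eq_bigl => f; rewrite inE.
Qed.

Lemma asc_seq_of f : asc f = nasc (seq_of f).
Proof.
rewrite /asc /nasc size_seq_of.
apply: eq_in_count => i; rewrite mem_iota add0n => /andP [_ hi].
by rewrite /is_asc !entry_seq_of (_ : i.+1 < n)%N //; lia.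
Qed.

Lemma no_double_asc_seq_of f : no_double_asc f = no_dasc (seq_of f).
Proof.
rewrite /no_double_asc /no_dasc size_seq_of.
apply: eq_in_all => i; rewrite mem_iota add0n => /andP [_ hi].
have hi1 : (i.+1 < n)%N by lia.
have hi2 : (i.+2 < n)%N by lia.
by rewrite /is_asc !entry_seq_of hi1 hi2.
Qed.

Lemma last_cond_seq_of f : last_cond f = ~~ ends_asc (seq_of f).
Proof. by rewrite /last_cond /ends_asc size_seq_of !entry_seq_of negb_and -leqNgt -leqNgt. Qed.

(* A nonzero entry below an earlier one forms a 021 pattern with the first entry, 0. *)
Lemma avoids021_seq_of f : inv_seq f -> avoids021 f = zero_or_record (seq_of f).
Proof.
move=> hinv; rewrite /avoids021 /zero_or_record size_seq_of.
apply/forallP/allP => [h k|h i].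
  rewrite mem_iota add0n => /andP [_ hk].
  rewrite entry_seq_of; case: eqP => //= hk0.
  apply/allP => j; rewrite mem_iota add0n => /andP [_ hj].
  have hjn : (j < n)%N by lia.
  rewrite !entry_seq_of leqNgt; apply/negP => hlt.
  have h0 : (0 < n)%N by lia.
  have e0 : ev f 0 = 0%N.
    by move/forallP: hinv => /(_ (Ordinal h0)); rewrite -ev_ord /= leqn0 => /eqP.
  have hj0 : (0 < j)%N.
    by case: (posnP j) hlt => // ->; rewrite e0 ltn0.
  move: (h (Ordinal h0)) => /forallP /(_ (Ordinal hjn)) /forallP /(_ (Ordinal hk)) /negP.
  by apply; rewrite /= hj0 hj -!ev_ord /= e0 hlt andbT /= lt0n; apply/eqP.
apply/forallP => j; apply/forallP => k; apply/negP => /and4P [hij hjk hik hkj].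
move: (h k); rewrite mem_iota add0n ltn_ord => /(_ isT) /orP [].
  by rewrite entry_seq_of ev_ord => /eqP e; move: hik; rewrite e ltn0.
move/allP => /(_ j); rewrite mem_iota add0n hjk => /(_ isT).
by rewrite !entry_seq_of !ev_ord leqNgt hkj.
Qed.

Lemma inv021E f : inv021 f = inv_seq f && zero_or_record (seq_of f).
Proof. by rewrite /inv021; case: (boolP (inv_seq f)) => // hf; rewrite avoids021_seq_of. Qed.

End SeqOf.

Definition wtA (s : seq nat) : tpoly := 'X ^+ nasc s.

Lemma wtA_rcons s v : (0 < size s)%N ->
  wtA (rcons s v) = wtA s * stepA (ends_asc s) (last_entry s < v)%N.
Proof.
move=> hs; rewrite /wtA nasc_rcons // exprD /stepA.
by case: (last_entry s < v)%N; rewrite ?expr1 ?expr0.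
Qed.

Definition wtG (s : seq nat) : tpoly :=
  if no_dasc s then 'X ^+ nasc s * (1 + 'X) ^+ ((size s).-1 + ends_asc s - 2 * nasc s)
  else 0.

Lemma wtG_rcons s v : (0 < size s)%N ->
  wtG (rcons s v) = wtG s * stepG (ends_asc s) (last_entry s < v)%N.
Proof.
move=> hs; rewrite /wtG no_dasc_rcons // nasc_rcons // ends_asc_rcons // size_rcons /=.
case hd : (no_dasc s); last by rewrite mul0r.
have := nasc_bound hs hd; rewrite /stepG.
case: (ends_asc s); case: (last_entry s < v)%N => /= hb.
- by rewrite mulr0.
- by rewrite addn0 mulr1; congr (_ * _ ^+ _); lia.
- rewrite addn1 exprS (_ : size s + 1 - 2 * (nasc s).+1 = (size s).-1 + 0 - 2 * nasc s)%N.
    by ring.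
  by lia.
- rewrite !addn0 (_ : size s - 2 * nasc s = ((size s).-1 - 2 * nasc s).+1)%N.
    by rewrite exprS; ring.
  by lia.
Qed.

Lemma sum_zero_or_record_tail_sum step fin (wt : seq nat -> tpoly) m :
  (forall s v, (0 < size s)%N ->
     wt (rcons s v) = wt s * step (ends_asc s) (last_entry s < v)%N) ->
  wt [:: 0%N] = 1 ->
  \sum_(s <- inv_seqs m.+1 | zero_or_record s) wt s * fin (ends_asc s) =
  tail_sum step fin m 0 Zeros false.
Proof.
move=> wt_rcons wt0; rewrite -add1n (sum_extensions fin wt_rcons).
by rewrite /= big_mkcond big_seq1 /= wt0 mul1r ext_sum_tail_sum.
Qed.

Lemma sum_asc_tail_sum n :
  \sum_(f : {ffun 'I_n.+1 -> 'I_n.+1} | inv021 f) 'X ^+ asc f =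
  tail_sum stepA finA n 0 Zeros false.
Proof.
rewrite -(sum_zero_or_record_tail_sum finA n wtA_rcons) ?expr0 //.
rewrite -(sum_inv_seqs n.+1 zero_or_record (fun s => wtA s * finA (ends_asc s))).
by apply: eq_big => [f|f _]; rewrite ?inv021E // /wtA mulr1 asc_seq_of.
Qed.

Lemma sum_ifeq_nat (V : nmodType) m k0 (F : nat -> V) : (k0 < m)%N ->
  \sum_(0 <= k < m) (if k0 == k then F k else 0) = F k0.
Proof.
move=> hk; rewrite -big_mkcond -big_filter /index_iota subn0.
rewrite (_ : filter _ _ = [:: k0]) ?big_seq1 //.
rewrite -(filter_pred1_uniq (iota_uniq 0 m)) ?mem_iota //.
by apply: eq_filter => k; rewrite /= eq_sym.
Qed.

Lemma gamma_coef_sum n (f : {ffun 'I_n.+1 -> 'I_n.+1}) :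
  \sum_(0 <= k < (n %/ 2).+1) (if tilde_I k f then 'X ^+ k * (1 + 'X) ^+ (n - 2 * k) else 0) =
  if inv021 f then wtG (seq_of f) * finG (ends_asc (seq_of f)) else 0.
Proof.
set c := [&& inv021 f, no_dasc (seq_of f) & ~~ ends_asc (seq_of f)].
have tildeE k : tilde_I k f = (nasc (seq_of f) == k) && c.
  by rewrite /tilde_I asc_seq_of no_double_asc_seq_of last_cond_seq_of andbCA eq_sym.
under eq_bigr do rewrite tildeE.
have [/and3P [hf hd ha] | hc] := boolP c.
  under eq_bigr do rewrite andbT.
  have := nasc_bound (s := seq_of f); rewrite size_seq_of (negbTE ha) => /(_ isT hd) hb.
  rewrite sum_ifeq_nat; last by rewrite ltnS leq_divRL //; lia.
  by rewrite hf /wtG hd (negbTE ha) size_seq_of addn0 mulr1.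
rewrite big1 => [|k _]; last by rewrite andbF.
case hf : (inv021 f) => //; move: hc; rewrite /c hf /= negb_and negbK /wtG /finG.
by case/orP => [/negbTE -> | ->]; rewrite ?mul0r ?mulr0.
Qed.

Lemma gamma_sum_tail_sum n :
  \sum_(0 <= k < (n %/ 2).+1)
     (#|[pred f : {ffun 'I_n.+1 -> 'I_n.+1} | tilde_I k f]|%:R
        * 'X ^+ k * (1 + 'X) ^+ (n - 2 * k)) =
  tail_sum stepG finG n 0 Zeros false.
Proof.
rewrite -(sum_zero_or_record_tail_sum finG n wtG_rcons); last by rewrite /wtG /= mulr1.
rewrite -(sum_inv_seqs n.+1 zero_or_record (fun s => wtG s * finG (ends_asc s))).
under eq_bigr do rewrite -mulrA -sumr_const big_distrl big_mkcond /=.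
rewrite exchange_big [RHS]big_mkcond; apply: eq_bigr => f _.
rewrite -inv021E -gamma_coef_sum; apply: eq_bigr => k _.
by rewrite inE; case: (tilde_I k f); rewrite ?mul1r ?mul0r.
Qed.

Unset Implicit Arguments. Set Strict Implicit.

Theorem theorem4p6 (n : nat) (hn : (1 <= n)%N) :
  \sum_(f : {ffun 'I_n -> 'I_n} | inv021 f) ('X ^+ asc f : {poly int}) =
  \sum_(0 <= k < ((n - 1) %/ 2).+1)
     (#|[pred f : {ffun 'I_n -> 'I_n} | tilde_I k f]|%:R
        * 'X ^+ k * (1 + 'X) ^+ (n - 1 - 2 * k)).
Proof.
case: n hn => [//|n] _.
by rewrite subSS subn0 gamma_sum_tail_sum sum_asc_tail_sum tail_sum_stepA_stepG.
Qed.
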